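(* Let $(T,f,(\le_h))$ be an ordered merge tree. Then $\mathcal T(\mathcal L((T,f,(\le_h))))=(T,f,(\le_h))$.
   Context: A merge tree $(T,f)$: a finite rooted tree $T$ identified with its topological realisation, with a continuous $f\colon T\to\mathbb{R}\cup\{\infty\}$ strictly increasing towards the root, $f(v)=\infty$ iff $v$ is the root; lowest leaf at height $0$; $L(T)$ is the set of leaves. $T_x$ is the subtree of descendants of $x$; $\mathrm{lca}$ the lowest common ancestor; $\mathrm{anc}_h(x)$ the unique ancestor of $x$ at height $h\ge f(x)$; $\mathbb{L}_h=\{x:f(x)=h\}$. A layer-order is a family $(\le_h)_{h\ge0}$ of total orders on the $\mathbb{L}_h$ that is consistent ($h_1\le h_2$ and $x_1\le_{h_1}x_2$ imply $\mathrm{anc}_{h_2}(x_1)\le_{h_2}\mathrm{anc}_{h_2}(x_2)$); $(T,f,(\le_h))$ is an ordered merge tree. A leaf-order is a total order $\sqsubseteq_L$ on $L(T)$ such that $u_1\sqsubseteq_L u\sqsubseteq_L u_2$ implies $u\in T_{\mathrm{lca}(u_1,u_2)}$; $(T,f,\sqsubseteq_L)$ is a leaf-ordered merge tree. $\mathcal L((T,f,(\le_h)))=(T,f,\sqsubseteq_L)$ with $u_1\sqsubseteq_L u_2$ iff $\mathrm{anc}_h(u_1)\le_h\mathrm{anc}_h(u_2)$ for $h=\max(f(u_1),f(u_2))$. $\mathcal T((T,f,\sqsubseteq_L))=(T,f,(\le_h))$ with $x_1\le_h x_2$ (for $x_1,x_2\in\mathbb{L}_h$) iff $x_1=x_2$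 or $u_1\sqsubseteq_L u_2$ for all leaves $u_1\in T_{x_1}$, $u_2\in T_{x_2}$. *)

From HB Require Import structures.
From mathcomp Require Import all_boot all_order all_algebra.
From mathcomp Require Import reals.
Set Implicit Arguments. Unset Strict Implicit. Unset Printing Implicit Defensive.
Import Order.TTheory GRing.Theory Num.Theory.
Local Open Scope ring_scope.

(* The combinatorial tree is given by a finite vertex
   type, a parent map and a root; [mt_f v] is the (finite) height of every
   non-root vertex, the root having height +infinity.

   Topological realisation: since f is continuous and strictly increasing
   towards the root, the points of the (open, half-open) edge from a non-root
   vertex v to its parent are in bijection with the heights strictly between
   f v and f (parent v) (resp. +oo when the parent is the root).  Hence every
   non-root point of the realisation is represented uniquely by a pair (v, h)
   where v is the lower endpoint of its edge (or the vertex itself) and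
   f v <= h < f (parent v).  The root (the unique point with f = oo) plays no
   role in the layers L_h, h >= 0 real, and is not represented. *)
Record merge_tree (R : realType) := MergeTree {
  mt_V : finType;
  mt_par : mt_V -> mt_V;
  mt_root : mt_V;
  mt_f : mt_V -> R;
  mt_par_root : mt_par mt_root = mt_root;
  mt_rooted : forall v, exists n, iter n mt_par v = mt_root;
  mt_incr : forall v, v != mt_root -> mt_par v != mt_root ->
            mt_f v < mt_f (mt_par v)
}.

Section MergeTreeDefs.
Variable R : realType.
Variable M : merge_tree R.

Notation V := (mt_V M).
Notation par := (@mt_par R M).
Notation root := (mt_root M).
Notation f := (@mt_f R M).

Definition point := (V * R)%type.

Definition is_point (x : point) : Prop :=
  x.1 != root /\ f x.1 <= x.2 /\ (par x.1 = root \/ x.2 < f (par x.1)).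

Definition height (x : point) : R := x.2.

Definition in_layer (h : R) (x : point) : Prop := is_point x /\ height x = h.

Definition vanc (v w : V) : Prop := exists n, iter n par v = w.

Definition desc (x y : point) : Prop :=
  is_point x /\ is_point y /\ height x <= height y /\ vanc x.1 y.1.

Definition is_leaf (v : V) : Prop :=
  v != root /\ forall u, u != root -> par u != v.

Definition leaf_point (u : V) : point := (u, f u).

Definition climb_step (h : R) (w : V) : V :=
  if (par w != root) && (f (par w) <= h) then par w else w.

Definition anc (h : R) (x : point) : point :=
  (iter #|V| (climb_step h) x.1, h).

Definition layer_rel := R -> point -> point -> Prop.

Definition total_order_on (P : point -> Prop) (le : point -> point -> Prop) :=
  (forall x, P x -> le x x) /\
  (forall x y, P x -> P y -> le x y -> le y x -> x = y) /\
  (forall x y z, P x -> P y -> P z -> le x y -> le y z -> le x z) /\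
  (forall x y, P x -> P y -> le x y \/ le y x).

Definition is_layer_order (ord : layer_rel) : Prop :=
  (forall h, 0 <= h -> total_order_on (in_layer h) (ord h)) /\
  (forall h1 h2 x1 x2, 0 <= h1 -> h1 <= h2 ->
     in_layer h1 x1 -> in_layer h1 x2 -> ord h1 x1 x2 ->
     ord h2 (anc h2 x1) (anc h2 x2)).

Definition Lmap (ord : layer_rel) (u1 u2 : V) : Prop :=
  let h := Num.max (f u1) (f u2) in
  ord h (anc h (leaf_point u1)) (anc h (leaf_point u2)).

Definition Tmap (sq : V -> V -> Prop) (h : R) (x1 x2 : point) : Prop :=
  x1 = x2 \/
  (forall u1 u2, is_leaf u1 -> is_leaf u2 ->
     desc (leaf_point u1) x1 -> desc (leaf_point u2) x2 -> sq u1 u2).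

End MergeTreeDefs.

Definition lowest_leaf_at_0 (R : realType) (M : merge_tree R) : Prop :=
  (exists u, @is_leaf R M u /\ @mt_f R M u = 0) /\
  (forall u, @is_leaf R M u -> 0 <= @mt_f R M u).

From mathcomp Require Import all_boot all_order all_algebra.
From mathcomp Require Import reals.
Import Order.TTheory GRing.Theory Num.Theory.

(* Every point x of a layer L_h lies above some leaf u, and for
   f u <= H <= h the ancestor at height h of anc_H u is the unique point of
   L_h above u.  So, by consistency, the comparison of two leaves u1, u2 at
   height max (f u1) (f u2) carries over to the points of L_h above them:
   this gives T(L(<=_h)) => <=_h.  Conversely, if u1, u2 were compared the
   wrong way at that height, consistency would give x2 <=_h x1, and
   antisymmetry would force x1 = x2. *)

Lemma iter_card_fixpoint {d} {X : porderType d} {T : finType} (m : T -> X)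
    (g : T -> T) :
  (forall y, g y != y -> (m y < m (g y))%O) ->
  forall x, g (iter #|T| g x) = iter #|T| g x.
Proof.
move=> g_incr x.
pose rank y := #|[set z | (m z < m y)%O]|.
have rank_lt y : (rank y < #|T|)%N.
  rewrite -cardsT; apply: proper_card; apply/properP; split; first exact: subsetT.
  by exists y; rewrite !inE ?ltxx.
have rank_incr y : g y != y -> (rank y < rank (g y))%N.
  move=> /g_incr m_lt; apply: proper_card; apply/properP; split.
    by apply/subsetP => z; rewrite !inE => /lt_trans; apply.
  by exists y; rewrite !inE ?ltxx.
suff /(_ #|T|) [//|le_card] :
    forall k, g (iter k g x) = iter k g x \/ (k <= rank (iter k g x))%N.
  by have := leq_ltn_trans le_card (rank_lt _); rewrite ltnn.
elim=> [|k IH]; first by right.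
rewrite iterS; have [fix_k|nfix_k] := eqVneq (g (iter k g x)) (iter k g x).
  by left; rewrite !fix_k.
case: IH => [fix_k|le_k]; first by rewrite fix_k eqxx in nfix_k.
by right; apply: leq_ltn_trans le_k (rank_incr _ nfix_k).
Qed.

Local Open Scope ring_scope.

Section MergeTreeAncestors.
Set Implicit Arguments.
Unset Strict Implicit.
Variables (R : realType) (M : merge_tree R).
Local Notation V := (mt_V M).
Local Notation par := (@mt_par R M).
Local Notation root := (mt_root M).
Local Notation f := (@mt_f R M).
Implicit Types (u v w a b : V) (x p q : point M) (h : R).

Lemma iter_par_root k : iter k par root = root.
Proof. by elim: k => //= k ->; exact: mt_par_root. Qed.

Lemma vanc_refl v : vanc v v.
Proof. by exists 0%N. Qed.

Lemma vanc_par v : vanc v (par v).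
Proof. by exists 1%N. Qed.

Lemma vanc_trans u v w : vanc u v -> vanc v w -> vanc u w.
Proof. by move=> [a <-] [b <-]; exists (b + a)%N; rewrite iterD. Qed.

Lemma vanc_total v a b : vanc v a -> vanc v b -> vanc a b \/ vanc b a.
Proof.
move=> [i <-] [j <-]; have [le_ij|/ltnW le_ji] := leqP i j.
  by left; exists (j - i)%N; rewrite -iterD subnK.
by right; exists (i - j)%N; rewrite -iterD subnK.
Qed.

Lemma vancP u v : reflect (vanc u v) (fconnect par u v).
Proof.
apply: (iffP idP) => [/iter_findex <-|[n <-]]; last exact: fconnect_iter.
by exists (findex par u v).
Qed.

Lemma f_le_vanc u w : vanc u w -> w != root -> f u <= f w.
Proof.
move=> [k <-]; elim: k => [|k IH] //= par_nroot.
have k_nroot : iter k par u != root.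
  by apply: contraNneq par_nroot => ->; rewrite mt_par_root.
exact: le_trans (IH k_nroot) (ltW (mt_incr k_nroot par_nroot)).
Qed.

Lemma exists_leaf_below v : v != root -> exists2 u, is_leaf u & vanc u v.
Proof.
move=> v_nroot; pose P u := (u != root) && fconnect par u v.
have Pv : P v by rewrite /P v_nroot connect0.
case: (arg_minP f Pv) => u /andP[u_nroot /vancP uv] u_min.
exists u => //; split=> // w w_nroot; apply/eqP => par_w.
have Pw : P w.
  rewrite /P w_nroot; apply/vancP; apply: vanc_trans uv.
  by rewrite -par_w; exact: vanc_par.
have par_nroot : par w != root by rewrite par_w.
have := mt_incr w_nroot par_nroot.
by rewrite par_w => /lt_le_trans/(_ (u_min w Pw)); rewrite ltxx.
Qed.

Lemma f_le_height u x : is_point x -> vanc u x.1 -> f u <= height x.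
Proof.
move=> [x_nroot [fx_le _]] ux.
by rewrite /height; exact: le_trans (f_le_vanc ux x_nroot) fx_le.
Qed.

Lemma leaf_point_is_point u : u != root -> is_point (leaf_point u).
Proof.
move=> u_nroot; do !split => //=.
by have [|par_nroot] := eqVneq (par u) root; [left | right; exact: mt_incr].
Qed.

Lemma desc_leaf_point u x :
  u != root -> is_point x -> vanc u x.1 -> desc (leaf_point u) x.
Proof.
move=> u_nroot x_pt ux; split; first exact: leaf_point_is_point.
by do 2!split => //; exact: f_le_height.
Qed.

(* The half-open edge of a point forbids a second point at the same height
   further up the same branch. *)
Lemma vanc_point_eq p q :
  is_point p -> is_point q -> height p = height q -> vanc p.1 q.1 -> p = q.
Proof.
case: p q => [v h] [w h'] [_ [_ top_v]] [w_nroot [fw_le _]] /= eq_h; subst h'.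
case=> [[|n] vw]; first by rewrite -vw.
have par_vw : vanc (par v) w by exists n; rewrite -iterSr.
case: top_v => [par_root|h_lt].
  by move: w_nroot; case: par_vw => k <-; rewrite par_root iter_par_root eqxx.
by have := lt_le_trans h_lt (le_trans (f_le_vanc par_vw w_nroot) fw_le); rewrite ltxx.
Qed.

Lemma point_eq_common_desc v p q : is_point p -> is_point q ->
  height p = height q -> vanc v p.1 -> vanc v q.1 -> p = q.
Proof.
move=> p_pt q_pt hpq vp vq; have [pq|qp] := vanc_total vp vq.
  exact: vanc_point_eq.
by apply/esym/vanc_point_eq.
Qed.

Lemma vanc_climb_step h w : vanc w (climb_step h w).
Proof. by rewrite /climb_step; case: ifP => _; [exact: vanc_par | exact: vanc_refl]. Qed.

Lemma vanc_anc h x : vanc x.1 (anc h x).1.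
Proof.
rewrite /anc /=; elim: #|V| => [|n IH] /=; first exact: vanc_refl.
exact: vanc_trans IH (vanc_climb_step _ _).
Qed.

Lemma anc_below h x :
  x.1 != root -> f x.1 <= h -> (anc h x).1 != root /\ f (anc h x).1 <= h.
Proof.
move=> x_nroot fx_le; rewrite /anc /=.
elim: #|V| => [|n [w_nroot fw_le]] //=.
by rewrite /climb_step; case: ifP => // /andP[].
Qed.

Lemma climb_step_anc h x : climb_step h (anc h x).1 = (anc h x).1.
Proof.
apply: (iter_card_fixpoint f) => w; rewrite /climb_step.
case: ifP => [/andP[par_nroot _] par_neq|_]; last by rewrite eqxx.
apply: mt_incr par_nroot; apply: contraNneq par_neq => ->.
by rewrite mt_par_root.
Qed.

Lemma anc_in_layer h x : x.1 != root -> f x.1 <= h -> in_layer h (anc h x).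
Proof.
move=> x_nroot fx_le; have [w_nroot fw_le] := anc_below x_nroot fx_le.
have w_fix := climb_step_anc h x.
move: w_nroot fw_le w_fix; rewrite /anc /=.
set w := iter _ _ _ => w_nroot fw_le w_fix.
do !split => //.
have [|par_nroot] := eqVneq (par w) root; [by left | right].
move: w_fix; rewrite /climb_step par_nroot /=; case: leP => // _ par_w.
by have := mt_incr w_nroot par_nroot; rewrite par_w ltxx.
Qed.

Lemma anc_eq v h x y : x.1 != root -> f x.1 <= h -> in_layer h y ->
  vanc v x.1 -> vanc v y.1 -> anc h x = y.
Proof.
move=> x_nroot fx_le [y_pt y_h] vx vy.
have [a_pt a_h] := anc_in_layer x_nroot fx_le.
apply: (point_eq_common_desc (v := v)) => //.
exact: vanc_trans vx (vanc_anc h x).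
Qed.

Lemma anc_anc_leaf_point H h u x : u != root -> f u <= H -> H <= h ->
  in_layer h x -> vanc u x.1 -> anc h (anc H (leaf_point u)) = x.
Proof.
move=> u_nroot fu_le H_le x_h ux.
have [a_nroot a_le] := anc_below (x := leaf_point u) u_nroot fu_le.
apply: (anc_eq (v := u)) => //; first exact: le_trans a_le H_le.
exact: (vanc_anc H (leaf_point u)).
Qed.

Section LeafOrderOfLayerOrder.
Variable ord : layer_rel M.
Hypothesis ord_layer : is_layer_order ord.

Lemma Lmap_lift h u1 u2 x1 x2 : 0 <= f u1 -> u1 != root -> u2 != root ->
  in_layer h x1 -> in_layer h x2 -> vanc u1 x1.1 -> vanc u2 x2.1 ->
  Lmap ord u1 u2 -> ord h x1 x2.
Proof.
move=> f1_ge0 u1_nroot u2_nroot x1_h x2_h u1x1 u2x2.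
rewrite /Lmap; set H := Num.max _ _ => ord_H.
have f1_le : f u1 <= H by rewrite le_max lexx.
have f2_le : f u2 <= H by rewrite le_max lexx orbT.
have f1_le_h : f u1 <= h by rewrite -x1_h.2; exact: f_le_height x1_h.1 u1x1.
have f2_le_h : f u2 <= h by rewrite -x2_h.2; exact: f_le_height x2_h.1 u2x2.
have H_le : H <= h by rewrite /H ge_max f1_le_h f2_le_h.
rewrite -(anc_anc_leaf_point u1_nroot f1_le H_le x1_h u1x1).
rewrite -(anc_anc_leaf_point u2_nroot f2_le H_le x2_h u2x2).
by apply: ord_layer.2 ord_H => //; [exact: le_trans f1_ge0 f1_le | exact: anc_in_layer..].
Qed.

Lemma Lmap_total u1 u2 : 0 <= f u1 -> u1 != root -> u2 != root ->
  Lmap ord u1 u2 \/ Lmap ord u2 u1.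
Proof.
move=> f1_ge0 u1_nroot u2_nroot; rewrite /Lmap [Num.max (f u2) _]maxC.
set H := Num.max _ _.
have f1_le : f u1 <= H by rewrite le_max lexx.
have f2_le : f u2 <= H by rewrite le_max lexx orbT.
have [_ [_ [_ ord_total]]] := ord_layer.1 H (le_trans f1_ge0 f1_le).
by apply: ord_total; exact: anc_in_layer.
Qed.

End LeafOrderOfLayerOrder.
End MergeTreeAncestors.

Theorem lemma8 (R : realType) (M : merge_tree R) (ord : layer_rel M) :
  lowest_leaf_at_0 M ->
  is_layer_order ord ->
  forall h : R, 0 <= h ->
  forall x1 x2 : point M, in_layer h x1 -> in_layer h x2 ->
  (Tmap (Lmap ord) h x1 x2 <-> ord h x1 x2).
Proof.
move=> [_ leaf_ge0] ord_layer h h_ge0 x1 x2 x1_h x2_h.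
have [ord_refl [ord_anti _]] := ord_layer.1 h h_ge0.
have [x1_pt _] := x1_h; have [x2_pt _] := x2_h.
split=> [[<- | T_x12] | ord_x12]; first exact: ord_refl.
  have [u1 u1_leaf u1x1] := exists_leaf_below x1_pt.1.
  have [u2 u2_leaf u2x2] := exists_leaf_below x2_pt.1.
  have [u1_nroot _] := u1_leaf; have [u2_nroot _] := u2_leaf.
  apply: (Lmap_lift ord_layer (leaf_ge0 u1 u1_leaf) u1_nroot u2_nroot) => //.
  by apply: T_x12 => //; exact: desc_leaf_point.
have [<-|x12_neq] := eqVneq x1 x2; [by left | right].
move=> u1 u2 u1_leaf u2_leaf [_ [_ [_ u1x1]]] [_ [_ [_ u2x2]]].
have [u1_nroot _] := u1_leaf; have [u2_nroot _] := u2_leaf.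
have [//|ord_21] := Lmap_total ord_layer (leaf_ge0 u1 u1_leaf) u1_nroot u2_nroot.
have ord_x21 :=
  Lmap_lift ord_layer (leaf_ge0 u2 u2_leaf) u2_nroot u1_nroot x2_h x1_h u2x2 u1x1 ord_21.
by rewrite (ord_anti _ _ x1_h x2_h ord_x12 ord_x21) eqxx in x12_neq.
Qed.
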